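(* Let $D\ge1$ and $0\le d\le D$. Let $G=G_1\,\Box\,\cdots\,\Box\,G_D$ be a cartesian product in which exactly $d$ factors are cycle digraphs $C_{n_\mu}$ with $n_\mu$ even, and the remaining $D-d$ factors are simple directed paths $P_{n_\mu}$ with $n_\mu$ odd. Then $$|V|\cdot r-\operatorname{rank}\mathcal D(G)=r\cdot\prod_{\mu=1}^D\big(\beta_0(G_\mu)+\beta_1(G_\mu)\big)=r\cdot 2^d,$$ where $|V|=\prod_\mu n_\mu$. Equivalently, $\dim\ker\mathcal D(G)/r=2^d$.
   Context: The cycle digraph $C_n$ ($n\ge3$) has vertex set $\{1,\dots,n\}$ and edges $i\to i+1$ for $1\le i\le n-1$ together with $n\to1$. The simple directed path $P_n$ ($n\ge2$) has vertex set $\{1,\dots,n\}$ and edges $i\to i+1$ for $1\le i\le n-1$. For a directed graph without multiple edges, the anti-symmetrized adjacency matrix $A_{\mathrm{as}}$ is the $|V|\times|V|$ matrix with: - $(A_{\mathrm{as}})_{ij}=1$ if an edge leaves $i$ and enters $j$; - $(A_{\mathrm{as}})_{ij}=-1$ if an edge leaves $j$ and enters $i$; - $(A_{\mathrm{as}})_{ij}=0$ otherwise. Let $\gamma_1,\dots,\gamma_D$ be complex $r\times r$ matrices satisfying $\gamma_\mu\gamma_\nu+\gamma_\nu\gamma_\mu=2\delta_{\mu\nu}\mathbf 1_r$. In particular each $\gamma_\mu$ is invertible, and $r=\operatorname{rank}\gamma$. For $G=G_1\Box\cdots\Box G_D$ with $G_\mu$ having $n_\mu$ vertices, define the $(r\prod_\mu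 n_\mu)$-square matrix $$\mathcal D(G)=\sum_{\mu=1}^D\Big(\mathbf 1_{n_D}\otimes\cdots\otimes\mathbf 1_{n_{\mu+1}}\otimes A_{\mathrm{as}}(G_\mu)\otimes\mathbf 1_{n_{\mu-1}}\otimes\cdots\otimes\mathbf 1_{n_1}\Big)\otimes\gamma_\mu,$$ where $\otimes$ is the Kronecker product and $\mathbf 1_k$ is the $k\times k$ identity. Betti numbers of a factor graph: $\beta_0$ is the number of connected components and $\beta_1=|E|-|V|+\beta_0$. Thus $\beta_0+\beta_1$ equals $2$ for a cycle and $1$ for a path. *)

From HB Require Import structures.
From mathcomp Require Import all_boot all_order all_algebra.
From mathcomp.real_closed Require Import complex.
Set Implicit Arguments. Unset Strict Implicit. Unset Printing Implicit Defensive.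
Import Order.TTheory GRing.Theory Num.Theory.
Local Open Scope ring_scope.

(* Digraphs on the vertex set 'I_n = {0,..,n-1} (0-based relabelling of {1,..,n}),
   given by their (boolean) edge relation. *)

Definition cycle_edge (n : nat) : rel 'I_n := fun i j => (j == (i.+1 %% n)%N :> nat).
Definition path_edge (n : nat) : rel 'I_n := fun i j => (j == i.+1 :> nat).

Definition factor_edge (cyc : bool) (n : nat) : rel 'I_n :=
  if cyc then @cycle_edge n else @path_edge n.
Arguments factor_edge : clear implicits.

Definition Aas (C : nzRingType) (n : nat) (e : rel 'I_n) : 'M[C]_n :=
  \matrix_(i, j) (if e i j then 1 else if e j i then -1 else 0).

Definition num_edges (n : nat) (e : rel 'I_n) : nat := #|[set p : 'I_n * 'I_n | e p.1 p.2]|.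
Definition beta0 (n : nat) (e : rel 'I_n) : nat :=
  n_comp (fun x y => e x y || e y x) 'I_n.
Definition beta1 (n : nat) (e : rel 'I_n) : nat :=
  (num_edges e + beta0 e - n)%N.

Definition vert (D : nat) (n : 'I_D -> nat) := {dffun forall mu : 'I_D, 'I_(n mu)}.

(* Entry ((v,s),(w,t)) of
   D(G) = sum_mu (1 (x) ... (x) Aas(G_mu) (x) ... (x) 1) (x) gamma_mu,
   i.e. the literal entrywise unfolding of the Kronecker products. *)
Definition DG_entry (C : nzRingType) (D : nat) (n : 'I_D -> nat) (cyc : 'I_D -> bool)
  (r : nat) (gam : 'I_D -> 'M[C]_r) (x y : vert n * 'I_r) : C :=
  \sum_(mu < D)
    (if [forall nu : 'I_D, (nu != mu) ==> (val (x.1 nu) == val (y.1 nu))]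
     then @Aas C (n mu) (factor_edge (cyc mu) (n mu)) (x.1 mu) (y.1 mu) * gam mu x.2 y.2
     else 0).

(* The matrix D(G), indexed by an enumeration of V x 'I_r (the rank does not
   depend on the chosen ordering of the basis). *)
Definition DG (C : nzRingType) (D : nat) (n : 'I_D -> nat) (cyc : 'I_D -> bool)
  (r : nat) (gam : 'I_D -> 'M[C]_r) : 'M[C]_(#|{: vert n * 'I_r}|) :=
  \matrix_(i, j) DG_entry cyc gam (enum_val i) (enum_val j).

(* Write D(G) = sum_mu A_mu (x) gamma_mu, where A_mu = 1 (x) ... (x) A_as(G_mu) (x) ... (x) 1.
   The A_mu are real and antisymmetric, commute with each other and with every 1 (x) gamma_nu,
   so the Clifford relations give D(G)^2 = sum_mu A_mu^2 (x) 1. Each -A_mu^2 = A_mu^* A_mu is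
   positive semidefinite, hence ker D(G) is the common kernel of the A_mu.
   A vector is killed by A_mu iff, along every line in direction mu, it is constant on positions
   of equal parity and, when G_mu is a path (with an odd number of vertices), vanishes at odd
   positions; around a cycle the parity classes are consistent because its length is even. The
   kernel is therefore spanned by the indicators of the parity patterns that are odd only along
   cycle directions, one per spinor index: 2^d r of them. Finally beta0 + beta1 is 2 for a cycle
   and 1 for a path. *)

From HB Require Import structures.
From mathcomp Require Import all_boot all_order all_algebra zify.
From mathcomp.real_closed Require Import complex.
Set Implicit Arguments.
Unset Strict Implicit.
Unset Printing Implicit Defensive.
Import Order.TTheory GRing.Theory Num.Theory.
Local Open Scope ring_scope.

Lemma big_ord_pred1_nat (R : Type) (idx : R) {op : Monoid.com_law idx} m a
    (F : nat -> R) :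
  \big[op/idx]_(k < m | k == a :> nat) F k = if (a < m)%N then F a else idx.
Proof.
case: ltnP => [am | ma]; first by rewrite (big_pred1 (Ordinal am)) // => k; rewrite -val_eqE.
by rewrite big_pred0 // => k; rewrite ltn_eqF // (leq_trans (ltn_ord k)).
Qed.

Lemma eq_parity_of_step (T : Type) (g : nat -> T) n :
  (forall k, (k.+2 < n)%N -> g k = g k.+2) ->
  forall k k', (k < n)%N -> (k' < n)%N -> odd k = odd k' -> g k = g k'.
Proof.
move=> step; have up k i : (k + i.*2 < n)%N -> g k = g (k + i.*2)%N.
  elim: i => [|i IH] lt_n; first by rewrite addn0.
  rewrite doubleS !addnS in lt_n *.
  by rewrite IH; [apply: step | apply: leq_trans lt_n; rewrite !ltnS leqW].
move=> k k'; wlog le_kk' : k k' / (k <= k')%N => [hw|].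
  by case: (leqP k k') => [|/ltnW] h *; [apply: hw | symmetry; apply: hw].
move=> _ lt_k'n odd_kk'; have even_d : ~~ odd (k' - k) by rewrite oddB // odd_kk' addbb.
have def_k' : k' = (k + ((k' - k)./2).*2)%N.
  by rewrite halfK (negbTE even_d) subn0 subnKC.
by rewrite def_k' in lt_k'n *; apply: up.
Qed.

Lemma clifford_sqr (R : pzRingType) (I : finType) (a g : I -> R) :
  (forall i j, GRing.comm (a i) (a j)) -> (forall i j, GRing.comm (a i) (g j)) ->
  (forall i j, g i * g j + g j * g i = (i == j)%:R *+ 2) ->
  (\sum_i a i * g i) ^+ 2 *+ 2 = (\sum_i a i ^+ 2) *+ 2.
Proof.
move=> caa cag gg.
have expand : (\sum_i a i * g i) ^+ 2 = \sum_i \sum_j a i * a j * (g i * g j).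
  rewrite expr2 mulr_suml; apply: eq_bigr => i _; rewrite mulr_sumr.
  by apply: eq_bigr => j _; rewrite mulrA -(mulrA (a i)) -(cag j i) !mulrA.
rewrite expand mulr2n {2}exchange_big -big_split /= -sumrMnl.
apply: eq_bigr => i _; rewrite -big_split /=.
under eq_bigr => j _ do rewrite (caa j i) -mulrDr gg mulrnAr.
rewrite (bigD1 i) //= eqxx mulr1 big1 ?addr0 ?expr2 // => j ne_ji.
by rewrite eq_sym (negbTE ne_ji) mulr0 mul0rn.
Qed.

Lemma natmul2_inj (F : numFieldType) (V : lmodType F) (u v : V) :
  u *+ 2 = v *+ 2 -> u = v.
Proof.
move/(congr1 ( *:%R (2%:R^-1 : F))); rewrite -!scaler_nat !scalerA mulVf ?scale1r //.
by rewrite pnatr_eq0.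
Qed.

Section SkewHermitianKernel.
Local Open Scope sesquilinear_scope.

Lemma skew_sum_sqr_ker (C : numClosedFieldType) N (I : finType) (A : I -> 'M[C]_N)
    (u : 'rV[C]_N) :
  (forall i, A i ^t* = - A i) -> u *m \sum_i A i *m A i = 0 ->
  forall i, u *m A i = 0.
Proof.
move=> skewA uA0.
have norms0 : \sum_i dotmx (u *m A i) (u *m A i) = 0.
  have := congr1 (fun M => (M *m u ^t*) 0 0) uA0.
  rewrite /= mul0mx mulmx_sumr mulmx_suml summxE [RHS]mxE => /eqP.
  rewrite -oppr_eq0 -sumrN => /eqP sum0; rewrite -[RHS]sum0; apply: eq_bigr => i _.
  rewrite dotmxE.
  have -> : (u *m A i) ^t* = A i ^t* *m u ^t* by rewrite trmx_mul map_mxM.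
  by rewrite skewA mulNmx mulmxN !mulmxA mxE.
move=> i; apply/eqP; rewrite -(dnorm_eq0 (@dotmx C N)); apply/eqP.
by move/psumr_eq0P: norms0; apply=> // j _; apply: dnorm_ge0.
Qed.

End SkewHermitianKernel.

Lemma sum_enum_val (R : nmodType) (T : finType) (F : T -> R) :
  \sum_(i < #|{: T}|) F (enum_val i) = \sum_x F x.
Proof. by rewrite -(big_enum_val (A := predT)). Qed.

Lemma odd_eq_modn2 a b : (a %% 2 = b %% 2)%N -> odd a = odd b.
Proof. by rewrite !modn2; case: (odd a); case: (odd b). Qed.

Lemma modSn_ord m k : (k < m)%N -> (k.+1 %% m = if (k.+1 < m)%N then k.+1 else 0)%N.
Proof.
move=> lt_km; case: ltnP => [/modn_small // | le_mk].
have -> : k.+1 = m by apply/eqP; rewrite eqn_leq lt_km le_mk.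
by rewrite modnn.
Qed.

Section Factor.
Variables (cyc : bool) (n : nat).

Definition factor_succ (m : nat) : nat := if cyc then (m.+1 %% n)%N else m.+1.

Lemma factor_edgeE (i j : 'I_n) : factor_edge cyc n i j = (j == factor_succ i :> nat).
Proof. by rewrite /factor_edge /factor_succ; case: cyc. Qed.

Variable C : nzRingType.
Local Notation A := (Aas C (factor_edge cyc n)).

Hypothesis cycle_gt2 : cyc -> (2 < n)%N.

Lemma factor_succ_asym (i j : 'I_n) :
  j == factor_succ i :> nat -> i == factor_succ j :> nat -> False.
Proof.
rewrite /factor_succ; case: (boolP cyc) => [hc|_] /=; last lia.
have n_gt2 := cycle_gt2 hc; have lt_in := ltn_ord i; have lt_jn := ltn_ord j.
by rewrite !modSn_ord //; case: (ltnP i.+1 n); case: (ltnP j.+1 n); lia.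
Qed.

Lemma Aas_factorE (i j : 'I_n) :
  A i j = (j == factor_succ i :> nat)%:R - (i == factor_succ j :> nat)%:R.
Proof.
rewrite /Aas mxE !factor_edgeE.
case: eqP => [/eqP ij | _]; case: eqP => [/eqP ji | _]; rewrite ?subr0 ?sub0r //.
by case: (factor_succ_asym ij ji).
Qed.

Lemma sum_mul_Aas (g : nat -> C) (j : 'I_n) :
  \sum_(k < n) g k * A k j =
  \sum_(k < n | j == factor_succ k :> nat) g k -
  (if (factor_succ j < n)%N then g (factor_succ j) else 0).
Proof.
under eq_bigr do rewrite Aas_factorE mulrBr !mulr_natr !mulrb.
by rewrite sumrB -!big_mkcond big_ord_pred1_nat.
Qed.

Lemma sum_mul_Aas_cycle (g : nat -> C) (j : 'I_n) : cyc ->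
  \sum_(k < n) g k * A k j =
  g (if (0 < j)%N then j.-1 else n.-1) - g (if (j.+1 < n)%N then j.+1 else 0).
Proof.
move=> hc; have n_gt2 := cycle_gt2 hc; have lt_jn := ltn_ord j.
rewrite sum_mul_Aas /factor_succ hc ltn_pmod ?modSn_ord //; last lia.
rewrite (eq_bigl (fun k : 'I_n => k == (if (0 < j)%N then j.-1 else n.-1) :> nat)).
  by rewrite big_ord_pred1_nat ifT //; case: ifP; lia.
by move=> k; have := ltn_ord k; rewrite modSn_ord //; do 2 case: ifP; lia.
Qed.

Lemma sum_mul_Aas_path (g : nat -> C) (j : 'I_n) : ~~ cyc ->
  \sum_(k < n) g k * A k j =
  (if (0 < j)%N then g j.-1 else 0) - (if (j.+1 < n)%N then g j.+1 else 0).
Proof.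
move=> hc; rewrite sum_mul_Aas /factor_succ (negbTE hc).
case: (posnP j) => [j0 | j_gt0].
  by rewrite big_pred0 // => k; rewrite j0.
rewrite (eq_bigl (fun k : 'I_n => k == j.-1 :> nat)) ?big_ord_pred1_nat.
  by rewrite ifT //; have := ltn_ord j; lia.
by move=> k; lia.
Qed.

Hypothesis cycle_even : cyc -> ~~ odd n.
Hypothesis path_odd : ~~ cyc -> odd n.

Lemma factor_left_ker_step (g : nat -> C) :
  (forall j : 'I_n, \sum_(k < n) g k * A k j = 0) ->
  forall k, (k.+2 < n)%N -> g k = g k.+2.
Proof.
move=> ker k lt_k2n; have lt_k1n : (k.+1 < n)%N by apply: ltnW.
have := ker (Ordinal lt_k1n).
case/orP: (orbN cyc) => hc; [rewrite sum_mul_Aas_cycle | rewrite sum_mul_Aas_path] => //=;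
  by rewrite lt_k2n => /eqP; rewrite subr_eq0 => /eqP.
Qed.

Lemma factor_left_kerP (g : nat -> C) :
  (forall j : 'I_n, \sum_(k < n) g k * A k j = 0) <->
  (forall k k', (k < n)%N -> (k' < n)%N -> odd k = odd k' -> g k = g k') /\
  (~~ cyc -> forall k, (k < n)%N -> odd k -> g k = 0).
Proof.
split=> [ker | [g_par g_odd] j].
  have g_par := eq_parity_of_step (factor_left_ker_step ker).
  split=> // hc k lt_kn odd_k; have lt_1n := leq_ltn_trans (odd_gt0 odd_k) lt_kn.
  rewrite (g_par k 1%N) //; have := ker (Ordinal (ltnW lt_1n)).
  by rewrite sum_mul_Aas_path //= lt_1n sub0r => /eqP; rewrite oppr_eq0 => /eqP.
have lt_jn := ltn_ord j; apply/eqP; case/orP: (orbN cyc) => hc.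
  have n_gt2 := cycle_gt2 hc; have n_even := cycle_even hc.
  have n2 : (n %% 2 = 0)%N by rewrite modn2 (negbTE n_even).
  rewrite sum_mul_Aas_cycle // subr_eq0; apply/eqP/g_par; try by case: ifP => ?; lia.
  by apply: odd_eq_modn2; do 2 case: ifP => ?; lia.
have n2 : (n %% 2 = 1)%N by rewrite modn2 path_odd.
rewrite sum_mul_Aas_path //; case: (posnP j) => [-> | j_gt0] /=.
  case: ifP => [lt_1n | _]; last by rewrite subr0.
  by rewrite sub0r oppr_eq0 g_odd.
case: ltnP => [lt_j1n | le_nj1].
  by rewrite subr_eq0 (g_par j.-1 j.+1) //; try lia; apply: odd_eq_modn2; lia.
by rewrite subr0 g_odd ?(odd_eq_modn2 (b := 1)) //; lia.
Qed.

End Factor.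

Section FactorBetti.
Variables (cyc : bool) (n : nat).
Hypothesis n_gt0 : (0 < n)%N.
Local Notation e := (factor_edge cyc n).

Lemma num_edges_factor : num_edges e = if cyc then n else n.-1.
Proof.
rewrite /num_edges -sum1_card (eq_bigl (fun p : 'I_n * 'I_n => true && e p.1 p.2)) => [|p];
  last by rewrite inE.
rewrite -(pair_big_dep xpredT (fun i j => e i j) (fun _ _ => 1%N)) /=.
under eq_bigr => i _ do
  rewrite (eq_bigl _ _ (factor_edgeE cyc i)) (big_ord_pred1_nat _ _ (fun=> 1%N)).
rewrite /factor_succ; case: cyc.
  by under eq_bigr do rewrite ltn_pmod //; rewrite sum1_card card_ord.
case: n n_gt0 => // m _; rewrite big_ord_recr /= ltnn addn0 -[RHS]card_ord -sum1_card.
by apply: eq_bigr => i _; rewrite ltnS ltn_ord.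
Qed.

Lemma beta0_factor : beta0 e = 1%N.
Proof.
pose x0 := Ordinal n_gt0; set e' := fun x y => e x y || e y x.
have sym : connect_sym e' by apply: sym_connect_sym => x y; rewrite /e' orbC.
have from_x0 y : connect e' x0 y.
  case: y => k; elim: k => [|k IH] lt_k; first by rewrite (_ : Ordinal _ = x0) //; apply: val_inj.
  apply: connect_trans (IH (ltnW lt_k)) (connect1 _).
  by rewrite /e' factor_edgeE /factor_succ /=; case: cyc; rewrite ?modn_small ?eqxx.
rewrite /beta0 -/e' -(n_comp_connect sym x0); apply: eq_n_comp_r => y.
by apply/idP/idP => // _; apply: from_x0.
Qed.

Lemma betti_factor : (beta0 e + beta1 e)%N = if cyc then 2%N else 1%N.
Proof. by rewrite /beta1 beta0_factor num_edges_factor; case: cyc; lia. Qed.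

End FactorBetti.

Section ProductGraph.
Variables (D : nat) (n : 'I_D -> nat) (cyc : 'I_D -> bool) (r : nat).
Local Notation T := (vert n * 'I_r)%type.
Implicit Types (v w : vert n) (mu nu : 'I_D) (x y : T).

(* [v] with coordinate [mu] replaced by [m]; [v] itself when [m] is out of range. *)
Definition vset (v : vert n) (mu : 'I_D) (m : nat) : vert n :=
  finfun (fun nu => if nu == mu then insubd (v nu) m else v nu).

Lemma vsetE v mu m nu : (vset v mu m nu : nat) =
  if nu == mu then (if (m < n mu)%N then m else v mu) else v nu.
Proof. by rewrite ffunE; case: eqP => [->|]; rewrite ?val_insubd. Qed.

Lemma vset_at v mu m : (m < n mu)%N -> (vset v mu m mu : nat) = m.
Proof. by rewrite vsetE eqxx => ->. Qed.

Lemma vset_ord v mu (k : 'I_(n mu)) : vset v mu k mu = k.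
Proof. by apply: val_inj; rewrite /= vset_at. Qed.

Lemma vset_id v mu : vset v mu (v mu) = v.
Proof.
by apply/ffunP => nu; apply: val_inj; rewrite /= vsetE; case: eqP => // ->; rewrite ltn_ord.
Qed.

Lemma vset_vset v mu m m' : (m' < n mu)%N -> vset (vset v mu m) mu m' = vset v mu m'.
Proof.
by move=> lt_m'n; apply/ffunP => nu; apply: val_inj; rewrite /= !vsetE lt_m'n; case: eqP.
Qed.

Lemma vset_sum_lt v mu m : (m < v mu)%N ->
  (\sum_nu (vset v mu m nu : nat) < \sum_nu (v nu : nat))%N.
Proof.
move=> lt_m; rewrite (bigD1 mu) // [X in (_ < X)%N](bigD1 mu) //= vset_at; last first.
  exact: ltn_trans lt_m (ltn_ord _).
rewrite (eq_bigr (fun nu => v nu : nat)) ?ltn_add2r // => nu /negbTE ne_nu.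
by rewrite vsetE ne_nu.
Qed.

Definition agree mu (v w : vert n) : bool :=
  [forall nu, (nu != mu) ==> (val (v nu) == val (w nu))].

Lemma agreeC mu v w : agree mu v w = agree mu w v.
Proof. by rewrite /agree; apply: eq_forallb => nu; rewrite (eq_sym (val (v nu))). Qed.

Definition parity (v : vert n) : {ffun 'I_D -> bool} := [ffun mu => odd (v mu)].

Lemma parity_vset v mu m : (m < n mu)%N -> odd m = odd (v mu) ->
  parity (vset v mu m) = parity v.
Proof.
move=> lt_m odd_m; apply/ffunP => nu; rewrite !ffunE.
by case: eqP => [->|]; rewrite ?val_insubd ?lt_m.
Qed.

Definition vclass (x : T) := (parity x.1, x.2).

Definition kernel_classes : {set {ffun 'I_D -> bool} * 'I_r} :=
  setX [set b : {ffun 'I_D -> bool} | [forall mu, b mu ==> cyc mu]] setT.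

Lemma vclass_kernel_classes x :
  (vclass x \in kernel_classes) = [forall mu, odd (x.1 mu) ==> cyc mu].
Proof. by rewrite !inE andbT; apply: eq_forallb => mu; rewrite ffunE. Qed.

Hypothesis cycle_gt2 : forall mu, cyc mu -> (2 < n mu)%N.
Hypothesis cycle_even : forall mu, cyc mu -> ~~ odd (n mu).
Hypothesis path_odd : forall mu, ~~ cyc mu -> odd (n mu).
Hypothesis factor_gt1 : forall mu, (1 < n mu)%N.

Definition bit_vertex (b : {ffun 'I_D -> bool}) : vert n :=
  finfun (fun mu => insubd (Ordinal (ltnW (factor_gt1 mu))) (b mu : nat)).

Lemma bit_vertexE b mu : (bit_vertex b mu : nat) = b mu.
Proof. by rewrite ffunE val_insubd (leq_ltn_trans (leq_b1 _) (factor_gt1 mu)). Qed.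

Definition class_rep (a : {ffun 'I_D -> bool} * 'I_r) : T := (bit_vertex a.1, a.2).

Lemma vclass_rep a : vclass (class_rep a) = a.
Proof.
by case: a => b s; congr pair; apply/ffunP => mu; rewrite ffunE bit_vertexE; case: (b mu).
Qed.

Lemma class_rep_vclass x : (forall mu, x.1 mu <= 1)%N -> class_rep (vclass x) = x.
Proof.
case: x => v s x_small; congr pair; apply/ffunP => mu; apply: val_inj.
by rewrite /= bit_vertexE ffunE; have := x_small mu; case: (v mu) => -[|[|k]].
Qed.

Section LeftKernel.
Variable C : nzRingType.
Local Notation A mu := (Aas C (factor_edge (cyc mu) (n mu))).

(* Entries of 1 (x) .. (x) A_as(G_mu) (x) .. (x) 1, acting on V x 'I_r. *)
Definition lift_as mu x y : C :=
  if agree mu x.1 y.1 && (x.2 == y.2) then A mu (x.1 mu) (y.1 mu) else 0.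

Lemma sum_mul_lift_as (f : T -> C) mu y (j : 'I_(n mu)) :
  \sum_x f x * lift_as mu x (vset y.1 mu j, y.2) =
  \sum_(k < n mu) f (vset y.1 mu k, y.2) * A mu k j.
Proof.
rewrite (partition_big (fun x : T => x.1 mu) predT) //=; apply: eq_bigr => k _.
have agree_k : agree mu (vset y.1 mu k) (vset y.1 mu j).
  by apply/forallP => nu; apply/implyP => /negbTE ne_nu; rewrite /= !vsetE ne_nu.
rewrite (bigD1 (vset y.1 mu k, y.2)) ?vset_ord //= big1 ?addr0.
  by rewrite /lift_as /= agree_k eqxx !vset_ord.
move=> [v s] /= /andP[/eqP v_k ne_x]; rewrite /lift_as /=.
case: ifP => [/andP[agree_v /eqP s_y] | _]; last by rewrite mulr0.
case/eqP: ne_x; congr pair => //; apply/ffunP => nu; apply: val_inj; rewrite /= vsetE.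
case: eqP => [-> | /eqP ne_nu]; first by rewrite ltn_ord v_k.
by move/forallP: agree_v => /(_ nu); rewrite ne_nu /= vsetE (negbTE ne_nu) => /eqP.
Qed.

Lemma line_left_kerP (f : T -> C) mu y :
  (forall j : 'I_(n mu), \sum_x f x * lift_as mu x (vset y.1 mu j, y.2) = 0) <->
  (forall k k', (k < n mu)%N -> (k' < n mu)%N -> odd k = odd k' ->
     f (vset y.1 mu k, y.2) = f (vset y.1 mu k', y.2)) /\
  (~~ cyc mu -> forall k, (k < n mu)%N -> odd k -> f (vset y.1 mu k, y.2) = 0).
Proof.
have factorP := factor_left_kerP (cycle_gt2 (mu := mu)) (cycle_even (mu := mu))
  (path_odd (mu := mu)) (fun k => f (vset y.1 mu k, y.2)).
split=> [ker | line j]; first by apply: factorP.1 => j; rewrite -sum_mul_lift_as.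
by rewrite sum_mul_lift_as; apply: factorP.2.
Qed.

Lemma left_ker_lift_asP (f : T -> C) :
  (forall mu y, \sum_x f x * lift_as mu x y = 0) <->
  (forall x mu k, (k < n mu)%N -> odd k = odd (x.1 mu) -> f (vset x.1 mu k, x.2) = f x) /\
  (forall x mu, ~~ cyc mu -> odd (x.1 mu) -> f x = 0).
Proof.
have at_y (g : T -> C) mu y : g y = g (vset y.1 mu (y.1 mu), y.2) by rewrite vset_id; case: y.
split=> [ker | [f_par f_odd] mu y].
  have line mu y := (line_left_kerP f mu y).1 (fun j => ker mu _).
  split=> [x mu k lt_k odd_k | x mu hc odd_x]; rewrite [f x](at_y f mu).
    by apply: (line mu x).1 => //; rewrite ltn_ord.
  by apply: (line mu x).2; rewrite ?ltn_ord.
rewrite (at_y (fun y => \sum_x f x * lift_as mu x y) mu); move: (y.1 mu).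
apply/line_left_kerP.
split=> [k k' lt_k lt_k' odd_k | hc k lt_k odd_k].
  by have := f_par (vset y.1 mu k, y.2) mu k'; rewrite /= vset_vset // vset_at // => ->.
by apply: (f_odd _ mu); rewrite /= ?vset_at.
Qed.

Lemma line_invariant_classP (f : T -> C) :
  (forall x mu k, (k < n mu)%N -> odd k = odd (x.1 mu) -> f (vset x.1 mu k, x.2) = f x) /\
  (forall x mu, ~~ cyc mu -> odd (x.1 mu) -> f x = 0) <->
  (forall x, f x = if vclass x \in kernel_classes then f (class_rep (vclass x)) else 0).
Proof.
split=> [[f_par f_odd] x | f_cls]; last first.
  split=> [x mu k lt_k odd_k | x mu not_cyc odd_x].
    by rewrite f_cls [RHS]f_cls /vclass /= parity_vset.
  rewrite f_cls vclass_kernel_classes; case: forallP => // /(_ mu).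
  by rewrite odd_x (negbTE not_cyc).
(* Replace a coordinate >= 2 by its parity, decreasing the coordinate sum. *)
have [m] := ubnP (\sum_nu (x.1 nu : nat)); elim: m x => // m IH x lt_m.
case: (pickP (fun mu => 1 < x.1 mu)%N) => [mu x_big | x_small].
  have lt_odd : (odd (x.1 mu) < x.1 mu)%N := leq_ltn_trans (leq_b1 _) x_big.
  have lt_odd_n : (odd (x.1 mu) < n mu)%N := ltn_trans lt_odd (ltn_ord _).
  have same_class : vclass (vset x.1 mu (odd (x.1 mu)), x.2) = vclass x.
    by rewrite /vclass /= parity_vset ?oddb.
  rewrite -(f_par x mu (odd (x.1 mu))) ?oddb // -same_class; apply: IH.
  by apply: leq_trans (vset_sum_lt lt_odd) _; rewrite -ltnS.
case: ifP => [_ | notK]; first by rewrite class_rep_vclass // => mu; rewrite leqNgt x_small.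
move: notK; rewrite vclass_kernel_classes => /forallPn[mu].
by rewrite negb_imply => /andP[odd_mu not_cyc]; apply: (f_odd x mu).
Qed.

End LeftKernel.

Section DiracMatrix.
Variables (C : numClosedFieldType) (gam : 'I_D -> 'M[C]_r).
Local Notation N := #|{: T}|.
Local Notation A mu := (Aas C (factor_edge (cyc mu) (n mu))).
Local Notation lift_as := (lift_as C).

Definition kmx (k : T -> T -> C) : 'M[C]_N := \matrix_(i, j) k (enum_val i) (enum_val j).

Lemma kmx_mul k l : kmx k *m kmx l = kmx (fun x y => \sum_z k x z * l z y).
Proof.
apply/matrixP => i j; rewrite !mxE -[RHS]sum_enum_val.
by apply: eq_bigr => z _; rewrite !mxE.
Qed.

Lemma kmx_sum (I : finType) (k : I -> T -> T -> C) :
  \sum_i kmx (k i) = kmx (fun x y => \sum_i k i x y).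
Proof. by apply/matrixP => i j; rewrite summxE !mxE; apply: eq_bigr => mu _; rewrite mxE. Qed.

Lemma mul_row_kmx (u : 'rV[C]_N) k j :
  (u *m kmx k) 0 j = \sum_x u 0 (enum_rank x) * k x (enum_val j).
Proof. by rewrite mxE -[RHS]sum_enum_val; apply: eq_bigr => i _; rewrite enum_valK mxE. Qed.

Definition spin (g : 'M[C]_r) x y : C := if x.1 == y.1 then g x.2 y.2 else 0.

Lemma sum_lift_as_spin mu g x y :
  \sum_z lift_as mu x z * spin g z y =
  if agree mu x.1 y.1 then A mu (x.1 mu) (y.1 mu) * g x.2 y.2 else 0.
Proof.
rewrite (bigD1 (y.1, x.2)) //= big1 ?addr0.
  by rewrite /lift_as /spin /= !eqxx andbT; case: ifP; rewrite ?mul0r.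
move=> [v t] /=; rewrite /lift_as /spin /=.
case: (v =P y.1) => [-> | _]; last by rewrite mulr0.
by case: (x.2 =P t) => [<- | _]; rewrite ?eqxx // andbF mul0r.
Qed.

Lemma sum_spin_lift_as mu g x y :
  \sum_z spin g x z * lift_as mu z y =
  if agree mu x.1 y.1 then A mu (x.1 mu) (y.1 mu) * g x.2 y.2 else 0.
Proof.
rewrite (bigD1 (x.1, y.2)) //= big1 ?addr0.
  by rewrite /lift_as /spin /= !eqxx andbT; case: ifP; rewrite ?mulr0 // mulrC.
move=> [v t] /=; rewrite /lift_as /spin /=.
case: (x.1 =P v) => [<- | _]; last by rewrite mul0r.
by case: (t =P y.2) => [-> | _]; rewrite ?eqxx // andbF mulr0.
Qed.

Lemma sum_spin_spin g h x y : \sum_z spin g x z * spin h z y = spin (g *m h) x y.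
Proof.
rewrite -(pair_bigA _ (fun v t => spin g x (v, t) * spin h (v, t) y)) /=.
rewrite (bigD1 x.1) //= [X in _ + X]big1 ?addr0 => [|v ne_v]; last first.
  by apply: big1 => t _; rewrite /spin /= eq_sym (negbTE ne_v) mul0r.
rewrite /spin /= eqxx; case: eqP => _; first by rewrite mxE.
by apply: big1 => t _; rewrite mulr0.
Qed.

Lemma sum_lift_as_lift_as mu nu x y : mu != nu ->
  \sum_z lift_as mu x z * lift_as nu z y =
  if (x.2 == y.2) && [forall k, (k != mu) && (k != nu) ==> (val (x.1 k) == val (y.1 k))]
  then A mu (x.1 mu) (y.1 mu) * A nu (x.1 nu) (y.1 nu) else 0.
Proof.
move=> ne_mu_nu; pose z0 := (vset x.1 mu (y.1 mu), x.2).
have agree_xz0 : agree mu x.1 z0.1.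
  by apply/forallP => k; apply/implyP => /negbTE ne_k; rewrite /= vsetE ne_k.
have agree_z0y : agree nu z0.1 y.1 =
    [forall k, (k != mu) && (k != nu) ==> (val (x.1 k) == val (y.1 k))].
  apply: eq_forallb => k; rewrite /= vsetE.
  by case: (k =P mu) => [-> | _] /=; rewrite ?ltn_ord ?eqxx ?implybT.
have z0_nu : z0.1 nu = x.1 nu by apply: val_inj; rewrite /= vsetE eq_sym (negbTE ne_mu_nu).
rewrite (bigD1 z0) //= big1 ?addr0.
  rewrite /lift_as /= agree_xz0 agree_z0y vset_ord z0_nu !eqxx andbC.
  by case: ifP; rewrite ?mulr0.
move=> [v t] ne_z0; rewrite /lift_as /=.
case: ifP => [/andP[agree_xv /eqP x2t] | _]; last by rewrite mul0r.
case: ifP => [/andP[agree_vy _] | _]; last by rewrite mulr0.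
case/eqP: ne_z0; rewrite /z0 -x2t; congr pair; apply/ffunP => k; apply: val_inj.
rewrite /= vsetE; case: eqP => [-> | /eqP ne_k]; rewrite ?ltn_ord.
  by move/forallP: agree_vy => /(_ mu); rewrite ne_mu_nu => /eqP.
by move/forallP: agree_xv => /(_ k); rewrite ne_k => /eqP.
Qed.

Definition liftmx mu := kmx (lift_as mu).
Definition spinmx g := kmx (spin g).

Lemma DG_sum : DG n cyc gam = \sum_mu liftmx mu *m spinmx (gam mu).
Proof.
rewrite (eq_bigr _ (fun mu _ => kmx_mul _ _)) kmx_sum.
by apply/matrixP => i j; rewrite !mxE; apply: eq_bigr => mu _; rewrite sum_lift_as_spin.
Qed.

Lemma liftmx_spinmxC mu g : liftmx mu *m spinmx g = spinmx g *m liftmx mu.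
Proof.
by rewrite !kmx_mul; apply/matrixP => i j; rewrite !mxE sum_lift_as_spin sum_spin_lift_as.
Qed.

Lemma liftmxC mu nu : liftmx mu *m liftmx nu = liftmx nu *m liftmx mu.
Proof.
have [-> // | ne_mu_nu] := eqVneq mu nu.
rewrite !kmx_mul; apply/matrixP => i j; rewrite !mxE.
have ne_nu_mu : nu != mu by rewrite eq_sym.
rewrite !sum_lift_as_lift_as // mulrC.
by congr (if _ && _ then _ else _); apply: eq_forallb => k; rewrite andbC.
Qed.

Lemma spinmxM g h : spinmx g *m spinmx h = spinmx (g *m h).
Proof. by rewrite kmx_mul; apply/matrixP => i j; rewrite !mxE sum_spin_spin. Qed.

Lemma spinmxD g h : spinmx (g + h) = spinmx g + spinmx h.
Proof. by apply/matrixP => i j; rewrite !mxE /spin; case: ifP; rewrite ?addr0 // mxE. Qed.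

Lemma spinmx_scalar c : spinmx c%:M = c%:M.
Proof.
apply/matrixP => i j; rewrite !mxE /spin -(inj_eq enum_val_inj).
case: (enum_val i) (enum_val j) => [v s] [w t] /=; rewrite xpair_eqE.
by case: eqP => //= _; rewrite mxE.
Qed.

Hypothesis gam_clifford : forall mu nu,
  gam mu *m gam nu + gam nu *m gam mu = ((mu == nu)%:R *+ 2)%:M.

Lemma DG_sqr : DG n cyc gam *m DG n cyc gam = \sum_mu liftmx mu *m liftmx mu.
Proof.
have spin_clifford mu nu : spinmx (gam mu) * spinmx (gam nu) +
    spinmx (gam nu) * spinmx (gam mu) = (mu == nu)%:R *+ 2 :> 'M[C]_N.
  by rewrite -!mulmxE !spinmxM -spinmxD gam_clifford spinmx_scalar !raddfMn.
have := clifford_sqr liftmxC (fun mu nu => liftmx_spinmxC mu (gam nu)) spin_clifford.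
by rewrite -DG_sum => /natmul2_inj.
Qed.

Lemma lift_as_conj_skew mu x y : (lift_as mu y x)^* = - lift_as mu x y.
Proof.
rewrite /lift_as agreeC eq_sym; case: ifP => _; last by rewrite conjC0 oppr0.
by rewrite !(Aas_factorE _ (cycle_gt2 (mu := mu))) rmorphB !rmorph_nat opprB.
Qed.

Local Open Scope sesquilinear_scope.

Lemma liftmx_skew mu : liftmx mu ^t* = - liftmx mu.
Proof. by apply/matrixP => i j; rewrite !mxE lift_as_conj_skew. Qed.

Lemma left_ker_DG_liftmx (u : 'rV[C]_N) :
  u *m DG n cyc gam = 0 -> forall mu, u *m liftmx mu = 0.
Proof.
move=> uD0; apply: skew_sum_sqr_ker liftmx_skew _.
by rewrite -DG_sqr mulmxA uD0 mul0mx.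
Qed.

Definition class_ind : 'M[C]_(#|kernel_classes|, N) :=
  \matrix_(a, i) (vclass (enum_val i) == enum_val a)%:R.
Definition class_rep_mx : 'M[C]_(N, #|kernel_classes|) :=
  \matrix_(i, a) (enum_val i == class_rep (enum_val a))%:R.

Lemma class_ind_rep : class_ind *m class_rep_mx = 1%:M.
Proof.
apply/matrixP => a b; rewrite !mxE.
transitivity (\sum_x (vclass x == enum_val a)%:R * (x == class_rep (enum_val b))%:R : C).
  by rewrite -[RHS]sum_enum_val; apply: eq_bigr => i _; rewrite !mxE.
rewrite (bigD1 (class_rep (enum_val b))) //= big1 => [|x /negbTE ne_x];
  last by rewrite ne_x mulr0.
by rewrite eqxx mulr1 addr0 vclass_rep (inj_eq enum_val_inj) eq_sym.
Qed.

Lemma rank_class_ind : \rank class_ind = #|kernel_classes|.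
Proof. by apply/eqP/row_freeP; exists class_rep_mx; exact: class_ind_rep. Qed.

Lemma class_ind_DG : class_ind *m DG n cyc gam = 0.
Proof.
suff ind_lift mu : class_ind *m liftmx mu = 0.
  by rewrite DG_sum mulmx_sumr big1 // => mu _; rewrite mulmxA ind_lift mul0mx.
apply/row_matrixP => a; rewrite row_mul row0; apply/rowP => j.
rewrite mul_row_kmx mxE; move: mu (enum_val j).
apply/left_ker_lift_asP/line_invariant_classP => x.
rewrite !mxE !enum_rankK vclass_rep; case: ifP => // notK.
by case: eqP => // ax; rewrite ax enum_valP in notK.
Qed.

Lemma DG_left_ker_class (u : 'rV[C]_N) : u *m DG n cyc gam = 0 ->
  u = u *m class_rep_mx *m class_ind.
Proof.
pose f x := u 0 (enum_rank x); move=> uD0.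
have f_cls : forall x,
    f x = if vclass x \in kernel_classes then f (class_rep (vclass x)) else 0.
  apply/line_invariant_classP/left_ker_lift_asP => mu y.
  by rewrite -[y]enum_rankK -mul_row_kmx left_ker_DG_liftmx // mxE.
have urep a : (u *m class_rep_mx) 0 a = f (class_rep (enum_val a)).
  rewrite mxE (bigD1 (enum_rank (class_rep (enum_val a)))) //= big1 => [|j ne_j].
    by rewrite mxE enum_rankK eqxx mulr1 addr0.
  by rewrite mxE -(inj_eq enum_val_inj) enum_rankK in ne_j *; rewrite (negbTE ne_j) mulr0.
apply/rowP => i; have -> : u 0 i = f (enum_val i) by rewrite /f enum_valK.
rewrite [RHS]mxE (eq_bigr (fun a => f (class_rep (enum_val a)) *
  (vclass (enum_val i) == enum_val a)%:R)) => [|a _]; last by rewrite urep mxE.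
rewrite -(big_enum_val (fun a => f (class_rep a) * (vclass (enum_val i) == a)%:R)).
rewrite f_cls; case: ifP => [inK | notK].
  rewrite (bigD1 (vclass (enum_val i))) //= eqxx mulr1 big1 ?addr0 // => b /andP[_ ne_b].
  by rewrite eq_sym (negbTE ne_b) mulr0.
apply/esym/big1 => b inK; case: eqP => [cls_b | _]; last by rewrite mulr0.
by rewrite cls_b inK in notK.
Qed.

Lemma DG_corank : (N - \rank (DG n cyc gam))%N = #|kernel_classes|.
Proof.
rewrite -mxrank_ker -rank_class_ind; apply/eqmx_rank/andP; split.
  apply/submxP; exists (kermx (DG n cyc gam) *m class_rep_mx).
  apply/row_matrixP => i; rewrite [RHS]row_mul [row i (_ *m class_rep_mx)]row_mul.
  by apply: DG_left_ker_class; rewrite -row_mul mulmx_ker row0.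
by apply/sub_kermxP; exact: class_ind_DG.
Qed.

End DiracMatrix.

End ProductGraph.

Lemma card_vert_spin (D : nat) (n : 'I_D -> nat) (r : nat) :
  #|{: vert n * 'I_r}| = (\prod_(mu < D) n mu * r)%N.
Proof.
rewrite card_prod card_ord card_dep_ffun foldrE big_map big_enum /=.
by congr (_ * _)%N; apply: eq_bigr => mu _; rewrite card_ord.
Qed.

Lemma card_kernel_classes (D : nat) (cyc : 'I_D -> bool) (r : nat) :
  #|kernel_classes cyc r| = (2 ^ #|[set mu | cyc mu]| * r)%N.
Proof.
rewrite cardsX cardsT card_ord -card_bool.
rewrite -(card_pffun_on false [set mu | cyc mu] (predT : pred bool)) cardsE.
congr (_ * _)%N; apply: eq_card => b; rewrite inE.
apply/forallP/pffun_onP => [b_cyc | [b_supp _] mu].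
  split=> [|x _] //; apply/subsetP => mu; rewrite !inE.
  by have := b_cyc mu; case: (b mu).
by apply/implyP => b_mu; have := subsetP b_supp mu; rewrite !inE b_mu; apply.
Qed.

Lemma prod_if_cycle (D : nat) (cyc : 'I_D -> bool) :
  (\prod_(mu < D) (if cyc mu then 2 else 1) = 2 ^ #|[set mu | cyc mu]|)%N.
Proof. by rewrite -big_mkcond /= prod_nat_const cardsE. Qed.

Unset Implicit Arguments.

Theorem theorem5 (R : rcfType) (D : nat) (n : 'I_D -> nat) (cyc : 'I_D -> bool)
  (r : nat) (gam : 'I_D -> 'M[R[i]]_r) :
  (1 <= D)%N ->
  (forall mu, cyc mu -> (3 <= n mu)%N /\ ~~ odd (n mu)) ->
  (forall mu, ~~ cyc mu -> (2 <= n mu)%N /\ odd (n mu)) ->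
  (forall mu nu, gam mu *m gam nu + gam nu *m gam mu = ((mu == nu)%:R *+ 2)%:M) ->
  let d := #|[set mu | cyc mu]| in
  ((\prod_(mu < D) n mu) * r - \rank (DG n cyc gam)
     = r * \prod_(mu < D) (beta0 (factor_edge (cyc mu) (n mu))
                          + beta1 (factor_edge (cyc mu) (n mu))))%N
  /\ (r * \prod_(mu < D) (beta0 (factor_edge (cyc mu) (n mu))
                          + beta1 (factor_edge (cyc mu) (n mu))) = r * 2 ^ d)%N.
Proof.
move=> _ cycle_len path_len gam_clifford d.
have factor_gt1 mu : (1 < n mu)%N.
  by case/orP: (orbN (cyc mu)) => [/cycle_len[/ltnW] | /path_len[]].
have betti : (\prod_(mu < D) (beta0 (factor_edge (cyc mu) (n mu))
    + beta1 (factor_edge (cyc mu) (n mu))) = 2 ^ d)%N.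
  by rewrite -prod_if_cycle; apply: eq_bigr => mu _; rewrite betti_factor // ltnW.
split; last by rewrite betti.
rewrite betti -card_vert_spin mulnC -card_kernel_classes.
exact (DG_corank (fun mu h => (cycle_len mu h).1) (fun mu h => (cycle_len mu h).2)
  (fun mu h => (path_len mu h).2) factor_gt1 gam_clifford).
Qed.
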